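(* Consider the state process of the load-balancing system described in the context (under any dispatching policy), with $\lambda=1-N^{-\alpha}$, $0<\alpha<0.5$, and the Lyapunov function $V(s)=\frac{p\lambda}{\mu_2}-s_{1,2}$ on $\mathcal S^{(N)}$. Then for $s\in\mathcal S^{(N)}$: (i) if $V(s)\ge\left(\frac{p\mu_1}{\mu_2}+\frac12\right)\frac{\log N}{\sqrt N}$ and $s_{1,1}\ge\frac{\lambda}{\mu_1}-\frac{\log N}{\sqrt N}$, then $\nabla V(s)\le -\frac{\mu_2}{2}\frac{\log N}{\sqrt N}$; (ii) if $V(s)\ge\left(\frac{p\mu_1}{\mu_2}+\frac12\right)\frac{\log N}{\sqrt N}$ and $s_{1,1}\le\frac{\lambda}{\mu_1}-\frac{\log N}{\sqrt N}$, then $\nabla V(s)\le 1$.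
   Context: System: $N$ identical servers, Poisson arrivals of rate $\lambda N$. Service times are Coxian-2 with parameters $(\mu_1,\mu_2,p)$, $\mu_1,\mu_2>0$, $0\le p<1$: a job in service completes phase 1 at rate $\mu_1$; then with probability $1-p$ it leaves, and with probability $p$ it enters phase 2, completed at rate $\mu_2$; $\frac1{\mu_1}+\frac p{\mu_2}=1$. Each server holds at most $b$ jobs (one in service, the rest in its buffer, served in order). The state $s=(s_{i,m})$ has $s_{i,m}$ = fraction of servers with at least $i$ jobs whose job in service is in phase $m$; state space $\mathcal S^{(N)}=\{s\in\mathbb R^{b\times2}: 1\ge s_{1,m}\ge\cdots\ge s_{b,m}\ge0,\ s_{1,1}+s_{1,2}\le1,\ Ns_{i,m}\in\mathbb N\}$. The state evolves as a CTMC with transition rates $q_{s,s'}$ induced by arrivals (dispatched by the policy), phase-1 completions, and phase-2 completions; the drift of $V$ at $s$ is $\nabla V(s)=\sum_{s'\ne s}q_{s,s'}(V(s')-V(s))$. *)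

From HB Require Import structures.
From mathcomp Require Import all_boot all_order all_algebra.
From mathcomp Require Import all_classical all_reals all_analysis.
Set Implicit Arguments. Unset Strict Implicit. Unset Printing Implicit Defensive.
Import Order.TTheory GRing.Theory Num.Theory.
Local Open Scope ring_scope.

(* Load-balancing system: N servers, buffer size b, Coxian-2 service.
   A state is a b x 2 real matrix: entry (i, m) (i : 'I_b, m : 'I_2) is
   s_{i+1, m+1} = fraction of servers with at least i+1 jobs whose job in
   service is in phase m+1. *)

Section LB.
Variables (R : realType) (N b : nat).

Definition state := 'M[R]_(b, 2).

Definition ph1 : 'I_2 := ord0.
Definition ph2 : 'I_2 := ord_max.

(* s_{k,m} for a 1-based level k; equals 0 beyond the buffer (k > b). *)
Definition sv (s : state) (k : nat) (m : 'I_2) : R :=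
  oapp (fun i : 'I_b => s i m) 0 (insub k.-1).

Definition in_state (s : state) : Prop :=
  [/\ (forall i m, 0 <= s i m <= 1),
      (forall (i j : 'I_b) m, (i <= j)%N -> s j m <= s i m),
      (0 < b)%N -> sv s 1 ph1 + sv s 1 ph2 <= 1
    & (forall i m, exists k : nat, N%:R * s i m = k%:R)].

Definition bump (s : state) (lo hi : nat) (m : 'I_2) (d : R) : state :=
  \matrix_(i < b, j < 2)
     (s i j + (if (j == m) && (lo <= i.+1 <= hi)%N then d else 0)).

Definition cnt (s : state) (k : nat) (m : 'I_2) : R :=
  N%:R * (sv s k m - sv s k.+1 m).

(* classes an arrival can be dispatched to: None = an idle server,
   Some (i, m) = a server with exactly i+1 jobs, job in service in phase m+1 *)
Definition cls := option ('I_b * 'I_2).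

Definition cls_count (s : state) (o : cls) : R :=
  match o with
  | None => N%:R * (1 - sv s 1 ph1 - sv s 1 ph2)
  | Some (i, m) => cnt s i.+1 m
  end.

Definition policy := state -> cls -> R.

Definition is_policy (pol : policy) : Prop :=
  forall s, in_state s ->
    [/\ (forall o, 0 <= pol s o),
        \sum_(o : cls) pol s o = 1
      & (forall o, cls_count s o = 0 -> pol s o = 0)].

Definition arr (s : state) (o : cls) : state :=
  match o with
  | None => bump s 1 1 ph1 (N%:R^-1)
  | Some (i, m) => if (i.+1 < b)%N then bump s i.+2 i.+2 m (N%:R^-1) else s
  end.
(* phase-1 completion, job leaves, at a server with k jobs *)
Definition dep1 (s : state) (k : nat) : state := bump s k k ph1 (- N%:R^-1).
(* phase-1 completion, job moves to phase 2, at a server with k jobs *)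
Definition mv12 (s : state) (k : nat) : state :=
  bump (bump s 1 k ph1 (- N%:R^-1)) 1 k ph2 (N%:R^-1).
(* phase-2 completion at a server with k jobs; next job starts in phase 1 *)
Definition dep2 (s : state) (k : nat) : state :=
  bump (bump s 1 k ph2 (- N%:R^-1)) 1 k.-1 ph1 (N%:R^-1).

Definition events (lam mu1 mu2 p : R) (pol : policy) (s : state)
  : seq (R * state) :=
  [seq (mu1 * (1 - p) * cnt s k ph1, dep1 s k) | k <- iota 1 b]
  ++ [seq (mu1 * p * cnt s k ph1, mv12 s k) | k <- iota 1 b]
  ++ [seq (mu2 * cnt s k ph2, dep2 s k) | k <- iota 1 b]
  ++ [seq (lam * N%:R * pol s o, arr s o) | o <- enum {: cls}].

(* drift (generator applied to V) at s:
   sum_{s' <> s} q_{s,s'} (V s' - V s); self-loops contribute 0 *)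
Definition drift (lam mu1 mu2 p : R) (pol : policy) (V : state -> R)
  (s : state) : R :=
  \sum_(e <- events lam mu1 mu2 p pol s) e.1 * (V e.2 - V s).

End LB.

(* Arrivals and phase-1 departures leave s_{1,2} unchanged; a phase-1 job
   moving to phase 2 raises it by 1/N and a phase-2 completion lowers it by
   1/N. Summing over server classes, the counts telescope, so for
   V = c - s_{1,2} the drift is exactly mu2 s_{1,2} - p mu1 s_{1,1},
   whatever the dispatching policy. Both bounds are then linear arithmetic,
   using only L >= 0, lam <= 1 and s_{1,1} >= 0. *)

From Pilot Require Import Defs.
From HB Require Import structures.
From mathcomp Require Import all_boot all_order all_algebra.
From mathcomp Require Import all_classical all_reals all_analysis.
From mathcomp.algebra_tactics Require Import ring lra.
Set Implicit Arguments. Unset Strict Implicit. Unset Printing Implicit Defensive.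
Import Order.TTheory GRing.Theory Num.Theory.
Local Open Scope ring_scope.

Section Transitions.
Variables (R : realType) (N b : nat).
Hypothesis b_gt0 : (0 < b)%N.
Implicit Types (s : state R b) (m : 'I_2).

Lemma sv1E s m : sv s 1 m = s (Ordinal b_gt0) m.
Proof. by rewrite /sv /= insubT. Qed.

Lemma sv_overflow s m : sv s b.+1 m = 0.
Proof. by rewrite /sv /= insubF // ltnn. Qed.

Lemma sv1_bump s lo hi m d m' :
  sv (Defs.bump s lo hi m d) 1 m'
  = sv s 1 m' + (if (m' == m) && (lo <= 1 <= hi)%N then d else 0).
Proof. by rewrite !sv1E mxE. Qed.

Lemma sv12_arr s o : sv (arr N s o) 1 ph2 = sv s 1 ph2.
Proof.
case: o => [[i m]|] /=; last by rewrite sv1_bump addr0.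
by case: ifP => // _; rewrite sv1_bump andbF addr0.
Qed.

Lemma sv12_dep1 s k : sv (dep1 N s k) 1 ph2 = sv s 1 ph2.
Proof. by rewrite sv1_bump addr0. Qed.

Lemma sv12_mv12 s k : (0 < k)%N -> sv (mv12 N s k) 1 ph2 = sv s 1 ph2 + N%:R^-1.
Proof. by move=> k_gt0; rewrite !sv1_bump /= k_gt0 addr0. Qed.

Lemma sv12_dep2 s k : (0 < k)%N -> sv (dep2 N s k) 1 ph2 = sv s 1 ph2 - N%:R^-1.
Proof. by move=> k_gt0; rewrite !sv1_bump /= k_gt0 addr0. Qed.

Lemma sum_sv_telescope s m :
  \sum_(k <- iota 1 b) (sv s k m - sv s k.+1 m) = sv s 1 m.
Proof.
have -> : iota 1 b = index_iota 1 b.+1 by rewrite /index_iota subn1.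
rewrite (eq_bigr (fun k => - sv s k.+1 m - - sv s k m)) => [|k _]; last by ring.
by rewrite telescope_sumr // sv_overflow; ring.
Qed.

Hypothesis N_gt0 : (0 < N)%N.

Lemma drift_sub_sv12 lam mu1 mu2 p pol c s :
  drift N lam mu1 mu2 p pol (fun x => c - sv x 1 ph2) s
  = mu2 * sv s 1 ph2 - p * mu1 * sv s 1 ph1.
Proof.
have N_neq0 : (N%:R : R) != 0 by rewrite pnatr_eq0 -lt0n.
rewrite /drift /events !big_cat /= !big_map.
rewrite big1 => [|k _]; last by rewrite /= sv12_dep1 subrr mulr0.
rewrite [X in _ + (_ + (_ + X))]big1 => [|o _]; last first.
  by rewrite /= sv12_arr subrr mulr0.
rewrite add0r addr0.
rewrite (eq_big_seq (fun k => - (p * mu1 / N%:R) * cnt N s k ph1)) => [|k]; last first.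
  by rewrite mem_iota => /andP[k_gt0 _]; rewrite /= sv12_mv12 //; field.
rewrite [X in _ + X](eq_big_seq (fun k => mu2 / N%:R * cnt N s k ph2)) => [|k]; last first.
  by rewrite mem_iota => /andP[k_gt0 _]; rewrite /= sv12_dep2 //; field.
by rewrite -!big_distrr /= !sum_sv_telescope; field.
Qed.

End Transitions.

Section DriftBounds.
Variables (R : realFieldType) (mu1 mu2 p lam L x y : R).
Hypotheses (mu1_gt0 : 0 < mu1) (mu2_gt0 : 0 < mu2) (p_ge0 : 0 <= p).
Hypothesis V_large : (p * mu1 / mu2 + 1 / 2) * L <= p * lam / mu2 - y.

Lemma V_large_scaled : mu2 * y <= p * lam - p * mu1 * L - mu2 * L / 2.
Proof.
have := V_large; rewrite -(ler_pM2l mu2_gt0).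
have -> : mu2 * ((p * mu1 / mu2 + 1 / 2) * L) = p * mu1 * L + mu2 * L / 2.
  by field; rewrite gt_eqF.
have -> : mu2 * (p * lam / mu2 - y) = p * lam - mu2 * y.
  by field; rewrite gt_eqF.
lra.
Qed.

Lemma drift_bound_negative :
  lam / mu1 - L <= x -> mu2 * y - p * mu1 * x <= - (mu2 / 2) * L.
Proof.
move=> x_large; have := V_large_scaled.
have : p * mu1 * (lam / mu1 - L) <= p * mu1 * x.
  by apply: ler_wpM2l => //; rewrite mulr_ge0 // ltW.
have -> : p * mu1 * (lam / mu1 - L) = p * lam - p * mu1 * L.
  by field; rewrite gt_eqF.
lra.
Qed.

Lemma drift_bound_one :
  0 <= L -> 0 <= x -> lam <= 1 -> p <= 1 -> mu2 * y - p * mu1 * x <= 1.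
Proof.
move=> L_ge0 x_ge0 lam_le1 p_le1; have := V_large_scaled.
have : 0 <= p * mu1 * x by rewrite !mulr_ge0 // ltW.
have : 0 <= p * mu1 * L by rewrite !mulr_ge0 // ltW.
have : 0 <= mu2 * L by rewrite mulr_ge0 // ltW.
have : p * lam <= p by rewrite -{2}[p]mulr1 ler_wpM2l.
lra.
Qed.

End DriftBounds.

Theorem lemma13 (R : realType) (N b : nat) (alpha mu1 mu2 p : R)
  (pol : policy R b)
  (hN : (0 < N)%N) (hb : (0 < b)%N)
  (ha : 0 < alpha) (ha' : alpha < 1 / 2)
  (hmu1 : 0 < mu1) (hmu2 : 0 < mu2) (hp : 0 <= p) (hp' : p < 1)
  (hmean : mu1^-1 + p / mu2 = 1)
  (hpol : is_policy N pol) :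
  let lam := 1 - (N%:R : R) `^ (- alpha) in
  let L := ln (N%:R : R) / Num.sqrt (N%:R : R) in
  let V := fun s : state R b => p * lam / mu2 - sv s 1 ph2 in
  forall s : state R b, in_state N s ->
    (V s >= (p * mu1 / mu2 + 1 / 2) * L ->
     sv s 1 ph1 >= lam / mu1 - L ->
     drift N lam mu1 mu2 p pol V s <= - (mu2 / 2) * L)
    /\
    (V s >= (p * mu1 / mu2 + 1 / 2) * L ->
     sv s 1 ph1 <= lam / mu1 - L ->
     drift N lam mu1 mu2 p pol V s <= 1).
Proof.
move=> lam L V s [s_bounds _ _ _].
rewrite /V drift_sub_sv12 //.
have L_ge0 : 0 <= L by rewrite divr_ge0 ?sqrtr_ge0 // ln_ge0 // ler1n.
have lam_le1 : lam <= 1 by rewrite /lam lerBlDr lerDl powR_ge0.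
have s11_ge0 : 0 <= sv s 1 ph1.
  by rewrite (sv1E hb); case/andP: (s_bounds (Ordinal hb) ph1).
split=> V_large s11_bound; rewrite /V in V_large.
  exact: (drift_bound_negative (lam := lam)).
by apply: (drift_bound_one (lam := lam) (L := L)) => //; apply: ltW.
Qed.
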